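(* Let $\Omega = \{-1\} \cup [0,\infty)$, let $E$ be the Banach space of all bounded continuous real functions on $\Omega$ with the supremum norm, and let $$C = \{ x \in E : 0 \le x(u) \le 1 \text{ for all } u \in \Omega,\ |x(u_1)-x(u_2)| \le |u_1-u_2| \text{ for all } u_1,u_2 \in [0,\infty)\}.$$ For $x \in C$ and $v \ge 0$ put $\alpha_x(v) = \sup\{ x(s) : s \in \{-1\}\cup[v,\infty)\}$. For $t \in [0,1]$ and $x \in C$ define $T(t)x$ on $\Omega$ by $$(T(t)x)(u) = \begin{cases} x(-1), & u=-1,\\ x(u-t), & u \ge t,\\ x(0)-t+u, & 0\le u\le t \text{ and } 1-\alpha_x(1-t+u) \le x(0)-t+u,\\ x(0)+t-u, & 0\le u\le t \text{ and } 1-\alpha_x(1-t+u) \ge x(0)+t-u,\\ 1-\alpha_x(1-t+u), & 0 \le u \le t \text{ and } |1-\alpha_x(1-t+u)-x(0)| \le t-u. \end{cases}$$ For $t > 1$, write $t = m/2 + t'$ with $m \in \mathbb N$ and $t' \in [0,1/2)$, and define $T(t) = T(1/2)^m \circ T(t')$. Then $C$ is a closed convex subset of $E$, $\{T(t): t\ge 0\}$ is a one-parameter nonexpansive semigroup on $C$, the zero function $0 \in C$ is not a common fixed point of $\{T(t) : t \ge 0\}$, and $$\lim_{t\to\infty} \left\| \frac{1}{t}\int_0^t T(s)0\, ds - 0 \right\| = 0.$$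
   Context: A family $\{T(t): t\ge 0\}$ of mappings on a subset $C$ of a Banach space is a one-parameter nonexpansive semigroup on $C$ if: each $T(t)$ is nonexpansive on $C$ ($\|T(t)x-T(t)y\|\le\|x-y\|$ for all $x,y\in C$); $T(0)x=x$ for all $x\in C$; $T(s+t)=T(s)\circ T(t)$ for all $s,t\ge 0$; and for each $x\in C$ the map $t\mapsto T(t)x$ is continuous. A common fixed point is a point $z\in C$ with $T(t)z=z$ for all $t\ge 0$. $\mathbb N$ denotes the set of positive integers. *)

From Stdlib Require Import Reals Lra Lia ZArith.
From Coquelicot Require Import Coquelicot.
Open Scope R_scope.

(* Elements of E are represented as functions R -> R; only their values on
   Omega = {-1} u [0, oo) matter. Equality in E is equality on Omega. *)
Definition Omega (u : R) : Prop := u = -1 \/ 0 <= u.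

Definition eqOn (x y : R -> R) : Prop := forall u, Omega u -> x u = y u.

Definition inE (x : R -> R) : Prop :=
  (exists M, forall u, Omega u -> Rabs (x u) <= M) /\
  (forall u, Omega u -> forall eps, 0 < eps -> exists delta, 0 < delta /\
     forall v, Omega v -> Rabs (v - u) < delta -> Rabs (x v - x u) < eps).

Definition supn (x : R -> R) : R :=
  real (Lub_Rbar (fun r => exists u, Omega u /\ r = Rabs (x u))).

Definition dist (x y : R -> R) : R := supn (fun u => x u - y u).

Definition inC (x : R -> R) : Prop :=
  inE x /\
  (forall u, Omega u -> 0 <= x u <= 1) /\
  (forall u1 u2, 0 <= u1 -> 0 <= u2 -> Rabs (x u1 - x u2) <= Rabs (u1 - u2)).

Definition zeroE : R -> R := fun _ => 0.

Definition alpha (x : R -> R) (v : R) : R :=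
  real (Lub_Rbar (fun r => exists s, (s = -1 \/ v <= s) /\ r = x s)).

(* T(t) for t in [0,1]; the three cases for 0 <= u <= t amount to clamping
   1 - alpha_x(1-t+u) into [x(0)-t+u, x(0)+t-u] (they agree on overlaps). *)
Definition T01 (t : R) (x : R -> R) : R -> R := fun u =>
  if Req_EM_T u (-1) then x (-1)
  else if Rle_dec t u then x (u - t)
  else
    let a := 1 - alpha x (1 - t + u) in
    if Rle_dec a (x 0 - t + u) then x 0 - t + u
    else if Rle_dec (x 0 + t - u) a then x 0 + t - u
    else a.

(* For t > 1: t = m/2 + t' with m = floor(2t), t' in [0,1/2);
   T(t) = T(1/2)^m o T(t'). *)
Definition mT (t : R) : nat := Z.to_nat (Int_part (2 * t)).

Definition T (t : R) (x : R -> R) : R -> R :=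
  if Rle_dec t 1 then T01 t x
  else Nat.iter (mT t) (T01 (1/2)) (T01 (t - INR (mT t) / 2) x).

Definition closed_in_E (P : (R -> R) -> Prop) : Prop :=
  forall (xs : nat -> R -> R) (x : R -> R),
    (forall n, P (xs n)) -> inE x ->
    is_lim_seq (fun n => dist (xs n) x) 0 -> P x.

Definition convex_set (P : (R -> R) -> Prop) : Prop :=
  forall x y lam, P x -> P y -> 0 <= lam <= 1 ->
    P (fun u => lam * x u + (1 - lam) * y u).

Definition nonexpansive_semigroup (P : (R -> R) -> Prop)
    (S : R -> (R -> R) -> (R -> R)) : Prop :=
  (forall t x, 0 <= t -> P x -> P (S t x)) /\
  (forall t x y, 0 <= t -> P x -> P y -> dist (S t x) (S t y) <= dist x y) /\
  (forall x, P x -> eqOn (S 0 x) x) /\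
  (forall s t x, 0 <= s -> 0 <= t -> P x -> eqOn (S (s + t) x) (S s (S t x))) /\
  (forall x, P x -> forall t0, 0 <= t0 -> forall eps, 0 < eps ->
     exists delta, 0 < delta /\ forall t, 0 <= t -> Rabs (t - t0) < delta ->
       dist (S t x) (S t0 x) < eps).

Definition common_fixed_point (P : (R -> R) -> Prop)
    (S : R -> (R -> R) -> (R -> R)) (z : R -> R) : Prop :=
  P z /\ forall t, 0 <= t -> eqOn (S t z) z.

(* E-valued Riemann integral: I is the Riemann integral over [a,b] of
   f : R -> E, i.e. the limit in E (sup norm on Omega) of tagged Riemann sums
   as the mesh tends to 0. A tagged partition with k+1 intervals is given by
   p 0 = a <= p 1 <= ... <= p (S k) = b and tags p i <= xi i <= p (S i). *)
Definition riemann_sum (f : R -> R -> R) (k : nat) (p xi : nat -> R) : R -> R :=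
  fun u => sum_n (fun i => f (xi i) u * (p (S i) - p i)) k.

Definition is_E_integral (f : R -> R -> R) (a b : R) (I : R -> R) : Prop :=
  inE I /\
  forall eps, 0 < eps -> exists delta, 0 < delta /\
    forall (k : nat) (p xi : nat -> R),
      p 0%nat = a -> p (S k) = b ->
      (forall i, (i <= k)%nat -> p i <= xi i <= p (S i)) ->
      (forall i, (i <= k)%nat -> p (S i) - p i < delta) ->
      dist I (riemann_sum f k p xi) <= eps.

(* For 0 <= t <= 1, T(t)x is x shifted right by t, with the gap [0, t] filled by
   clamping 1 - alpha_x(1 - t + u) into the 1-Lipschitz cone around x(0).  Shifting
   x shifts alpha_x, and clamping into nested cones composes, so
   T(s) o T(t) = T(s + t) whenever s + t <= 1; as all these maps commute, the
   semigroup law for the decompositions t = m/2 + t' follows.  Nonexpansiveness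
   holds because alpha_x(v) is 1-Lipschitz in x for the sup norm, and continuity
   because T(h)x is h-close to x.
   The orbit of 0 is a tent of height 1 and base 2 moving right at unit speed, so
   each point u is covered by it during a time interval of length 2 only: the
   integral of T(s)0 over [0, t] has sup norm at most 2 and its mean tends to 0,
   although T(1/2)0 <> 0. *)

From Stdlib Require Import Reals Lra Lia ZArith.
From Coquelicot Require Import Coquelicot.
Open Scope R_scope.

Ltac minmax_lra := unfold Rmax, Rmin in *; repeat destruct Rle_dec; try lra.

Lemma real_Lub_Rbar_bounds (E : R -> Prop) (M : R) :
  (forall r, E r -> r <= M) -> (exists r0, E r0) ->
  (forall r, E r -> r <= real (Lub_Rbar E)) /\ real (Lub_Rbar E) <= M.
Proof.
  intros HM [r0 Hr0]. destruct (Lub_Rbar_correct E) as [ub lub].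
  destruct (Lub_Rbar E) as [l| |] eqn:El; simpl.
  - split; [exact ub|]. apply (lub (Finite M)). exact HM.
  - exfalso. exact (lub (Finite M) HM).
  - exfalso. exact (ub r0 Hr0).
Qed.

Definition bounded_on_Omega (x : R -> R) : Prop :=
  exists M, forall u, Omega u -> Rabs (x u) <= M.

Lemma Omega_m1 : Omega (-1).
Proof. left; reflexivity. Qed.

Lemma supn_ub x u : bounded_on_Omega x -> Omega u -> Rabs (x u) <= supn x.
Proof.
  intros [M HM] Hu. apply (real_Lub_Rbar_bounds _ M).
  - intros r [v [Hv ->]]; auto.
  - exists (Rabs (x (-1))), (-1). split; [exact Omega_m1|reflexivity].
  - exists u; auto.
Qed.

Lemma supn_le x M : (forall u, Omega u -> Rabs (x u) <= M) -> supn x <= M.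
Proof.
  intros HM. apply (real_Lub_Rbar_bounds _ M).
  - intros r [v [Hv ->]]; auto.
  - exists (Rabs (x (-1))), (-1). split; [exact Omega_m1|reflexivity].
Qed.

Lemma supn_eqOn x y : eqOn x y -> supn x = supn y.
Proof.
  intros H. unfold supn. f_equal. apply Lub_Rbar_eqset.
  intros r; split; intros [u [Hu ->]]; exists u; split; auto; rewrite H; auto.
Qed.

Lemma dist_sym x y : dist x y = dist y x.
Proof.
  unfold dist, supn. f_equal. apply Lub_Rbar_eqset.
  intros r; split; intros [u [Hu ->]]; exists u; split; auto; apply Rabs_minus_sym.
Qed.

Lemma dist_eqOn x x' y y' : eqOn x x' -> eqOn y y' -> dist x y = dist x' y'.
Proof. intros H1 H2. apply supn_eqOn. intros u Hu. rewrite H1, H2; auto. Qed.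

Lemma dist_ub x y u : bounded_on_Omega x -> bounded_on_Omega y -> Omega u ->
  Rabs (x u - y u) <= dist x y.
Proof.
  intros [M HM] [N HN] Hu. apply (supn_ub (fun u => x u - y u)); auto.
  exists (M + N). intros v Hv. specialize (HM v Hv). specialize (HN v Hv).
  unfold Rminus. eapply Rle_trans; [apply Rabs_triang|]. rewrite Rabs_Ropp. lra.
Qed.

Lemma dist_le x y M : (forall u, Omega u -> Rabs (x u - y u) <= M) -> dist x y <= M.
Proof. apply supn_le. Qed.

Lemma eqOn_refl x : eqOn x x.
Proof. intros u _; reflexivity. Qed.

Lemma eqOn_sym x y : eqOn x y -> eqOn y x.
Proof. intros H u Hu; symmetry; auto. Qed.

Lemma eqOn_trans x y z : eqOn x y -> eqOn y z -> eqOn x z.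
Proof. intros H1 H2 u Hu; rewrite H1; auto. Qed.

Lemma inE_intro x M L : 0 < L -> (forall u, Omega u -> Rabs (x u) <= M) ->
  (forall u1 u2, 0 <= u1 -> 0 <= u2 -> Rabs (x u1 - x u2) <= L * Rabs (u1 - u2)) ->
  inE x.
Proof.
  intros HL HM HLip. split; [exists M; exact HM|].
  intros u [Hu|Hu] eps Heps.
  - (* -1 is isolated in Omega *)
    exists 1. split; [lra|]. intros v [Hv|Hv] Hd.
    + subst. rewrite Rminus_diag, Rabs_R0; exact Heps.
    + subst. rewrite Rabs_pos_eq in Hd; lra.
  - exists (Rmin (eps / L) 1). split.
    { apply Rmin_glb_lt; [apply Rdiv_lt_0_compat|]; lra. }
    pose proof (Rmin_l (eps / L) 1). pose proof (Rmin_r (eps / L) 1).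
    intros v [Hv|Hv] Hd.
    + subst. rewrite Rabs_left in Hd; lra.
    + eapply Rle_lt_trans; [apply HLip; auto|].
      apply Rlt_le_trans with (L * (eps / L)); [apply Rmult_lt_compat_l; lra|].
      right; field; lra.
Qed.

Definition lip1_on_nonneg (x : R -> R) : Prop :=
  forall u1 u2, 0 <= u1 -> 0 <= u2 -> Rabs (x u1 - x u2) <= Rabs (u1 - u2).

Lemma inC_intro x : (forall u, Omega u -> 0 <= x u <= 1) -> lip1_on_nonneg x -> inC x.
Proof.
  intros H01 HL. split; [|split; auto].
  apply (inE_intro x 1 1); [lra| |].
  - intros u Hu. specialize (H01 u Hu). rewrite Rabs_pos_eq; lra.
  - intros u1 u2 H1 H2. rewrite Rmult_1_l. auto.
Qed.

Lemma inC_bounded x : inC x -> bounded_on_Omega x.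
Proof. intros [[H _] _]; exact H. Qed.

Lemma inC_01 x u : inC x -> Omega u -> 0 <= x u <= 1.
Proof. intros [_ [H _]]; auto. Qed.

Lemma inC_lip1 x : inC x -> lip1_on_nonneg x.
Proof. intros [_ [_ H]]; exact H. Qed.

Lemma le_epsilon_add a b : (forall eps, 0 < eps -> a <= b + eps) -> a <= b.
Proof.
  intros H. destruct (Rle_lt_dec a b); auto. specialize (H ((a - b) / 2)). lra.
Qed.

Lemma inC_closed : closed_in_E inC.
Proof.
  intros xs x Hxs HxE Hlim.
  assert (Happrox : forall eps, 0 < eps ->
            exists n, forall u, Omega u -> Rabs (xs n u - x u) < eps).
  { intros eps Heps. apply is_lim_seq_spec in Hlim.
    destruct (Hlim (mkposreal eps Heps)) as [N HN]. exists N. intros u Hu.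
    specialize (HN N (le_n _)). simpl in HN. rewrite Rminus_0_r in HN.
    eapply Rle_lt_trans; [apply dist_ub; auto; [apply inC_bounded|apply HxE]; auto|].
    eapply Rle_lt_trans; [apply Rle_abs|exact HN]. }
  split; [exact HxE|split].
  - intros u Hu. split; apply le_epsilon_add; intros eps Heps;
      destruct (Happrox eps Heps) as [n Hn]; specialize (Hn u Hu);
      apply Rabs_lt_between in Hn; pose proof (inC_01 _ u (Hxs n) Hu); lra.
  - intros u1 u2 H1 H2. apply le_epsilon_add. intros eps Heps.
    destruct (Happrox (eps / 2) ltac:(lra)) as [n Hn].
    pose proof (Hn u1 ltac:(right; lra)) as E1. pose proof (Hn u2 ltac:(right; lra)) as E2.
    pose proof (inC_lip1 _ (Hxs n) u1 u2 H1 H2) as Hl.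
    apply Rabs_lt_between in E1, E2. apply Rabs_le_between in Hl.
    pose proof (Rle_abs (u1 - u2)). apply Rabs_le. lra.
Qed.

Lemma inC_convex : convex_set inC.
Proof.
  intros x y lam Hx Hy Hl. apply inC_intro.
  - intros u Hu. pose proof (inC_01 x u Hx Hu). pose proof (inC_01 y u Hy Hu). nra.
  - intros u1 u2 H1 H2.
    pose proof (inC_lip1 x Hx u1 u2 H1 H2). pose proof (inC_lip1 y Hy u1 u2 H1 H2).
    replace (lam * x u1 + (1 - lam) * y u1 - (lam * x u2 + (1 - lam) * y u2))
      with (lam * (x u1 - x u2) + (1 - lam) * (y u1 - y u2)) by ring.
    eapply Rle_trans; [apply Rabs_triang|].
    rewrite !Rabs_mult, (Rabs_pos_eq lam), (Rabs_pos_eq (1 - lam)) by lra. nra.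
Qed.

Lemma inC_zeroE : inC zeroE.
Proof.
  apply inC_intro; unfold zeroE; [intros; lra|].
  intros u1 u2 _ _. rewrite Rminus_diag, Rabs_R0. apply Rabs_pos.
Qed.

Lemma alpha_ub x v M s : (forall s, (s = -1 \/ v <= s) -> x s <= M) ->
  (s = -1 \/ v <= s) -> x s <= alpha x v.
Proof.
  intros HM Hs. apply (real_Lub_Rbar_bounds _ M).
  - intros r [w [Hw ->]]; auto.
  - exists (x (-1)), (-1). split; [left|]; reflexivity.
  - exists s; auto.
Qed.

Lemma alpha_le x v M : (forall s, (s = -1 \/ v <= s) -> x s <= M) -> alpha x v <= M.
Proof.
  intros HM. apply (real_Lub_Rbar_bounds _ M).
  - intros r [w [Hw ->]]; auto.
  - exists (x (-1)), (-1). split; [left|]; reflexivity.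
Qed.

Lemma alpha_eq x v M : (forall s, (s = -1 \/ v <= s) -> x s <= M) ->
  (exists s, (s = -1 \/ v <= s) /\ x s = M) -> alpha x v = M.
Proof.
  intros HM [s [Hs Hx]]. apply Rle_antisym; [apply alpha_le; auto|].
  rewrite <- Hx. eapply alpha_ub; eauto.
Qed.

Lemma alpha_eqOn x y v : 0 <= v -> eqOn x y -> alpha x v = alpha y v.
Proof.
  intros Hv H. unfold alpha. f_equal. apply Lub_Rbar_eqset.
  intros r; split; intros [s [Hs ->]]; exists s; (split; [exact Hs|]);
    [apply H|symmetry; apply H]; destruct Hs; [left|right|left|right]; lra.
Qed.

Lemma inC_le_alpha x v s : inC x -> 0 <= v -> (s = -1 \/ v <= s) -> x s <= alpha x v.
Proof.
  intros Hx Hv. apply (alpha_ub x v 1).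
  intros w Hw. apply (inC_01 x w Hx). destruct Hw; [left|right]; lra.
Qed.

Lemma alpha_01 x v : inC x -> 0 <= v -> 0 <= alpha x v <= 1.
Proof.
  intros Hx Hv. split.
  - eapply Rle_trans; [apply (inC_01 x (-1) Hx Omega_m1)|].
    apply inC_le_alpha; auto.
  - apply alpha_le. intros s Hs. apply (inC_01 x s Hx). destruct Hs; [left|right]; lra.
Qed.

Lemma alpha_antitone_lip1 x v1 v2 : inC x -> 0 <= v1 <= v2 ->
  alpha x v2 <= alpha x v1 <= alpha x v2 + (v2 - v1).
Proof.
  intros Hx Hv. split; apply alpha_le; intros s [Hs|Hs].
  - apply inC_le_alpha; auto; lra.
  - apply inC_le_alpha; auto; lra.
  - pose proof (inC_le_alpha x v2 s Hx ltac:(lra) (or_introl Hs)). lra.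
  - destruct (Rle_lt_dec v2 s).
    + pose proof (inC_le_alpha x v2 s Hx ltac:(lra) (or_intror r)). lra.
    + (* below v2 the values of x exceed x(v2) by at most v2 - s *)
      pose proof (inC_le_alpha x v2 v2 Hx ltac:(lra) (or_intror (Rle_refl _))).
      pose proof (inC_lip1 x Hx s v2 ltac:(lra) ltac:(lra)) as Hl.
      rewrite (Rabs_left (s - v2)) in Hl by lra. apply Rabs_le_between in Hl. lra.
Qed.

Lemma alpha_nonexpansive x y v : inC x -> inC y -> 0 <= v ->
  Rabs (alpha x v - alpha y v) <= dist x y.
Proof.
  intros Hx Hy Hv.
  assert (Hone : forall x y, inC x -> inC y -> alpha x v <= alpha y v + dist x y).
  { clear x y Hx Hy. intros x y Hx Hy. apply alpha_le. intros s Hs.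
    assert (Hs' : Omega s) by (destruct Hs; [left|right]; lra).
    pose proof (dist_ub x y s (inC_bounded x Hx) (inC_bounded y Hy) Hs') as Hd.
    pose proof (inC_le_alpha y v s Hy Hv Hs).
    apply Rabs_le_between in Hd. lra. }
  pose proof (Hone x y Hx Hy). pose proof (Hone y x Hy Hx) as Hyx.
  rewrite (dist_sym y x) in Hyx. apply Rabs_le; lra.
Qed.

Definition clamp (a lo hi : R) : R := Rmax lo (Rmin a hi).

Lemma T01_m1 t x : T01 t x (-1) = x (-1).
Proof. unfold T01. destruct Req_EM_T; [reflexivity|congruence]. Qed.

Lemma T01_shift t x u : 0 <= u -> t <= u -> T01 t x u = x (u - t).
Proof.
  intros. unfold T01. destruct Req_EM_T; [lra|]. destruct Rle_dec; [reflexivity|lra].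
Qed.

Lemma T01_gap t x u : 0 <= u < t ->
  T01 t x u = clamp (1 - alpha x (1 - t + u)) (x 0 - t + u) (x 0 + t - u).
Proof.
  intros. unfold T01, clamp. destruct Req_EM_T; [lra|]. destruct Rle_dec; [lra|].
  minmax_lra.
Qed.

Lemma T01_at_0 t x : 0 <= t ->
  T01 t x 0 = clamp (1 - alpha x (1 - t)) (x 0 - t) (x 0 + t).
Proof.
  intros Ht. destruct (Rle_lt_dec t 0).
  - assert (t = 0) by lra. subst. rewrite T01_shift by lra.
    rewrite Rminus_0_r. unfold clamp. minmax_lra.
  - rewrite T01_gap by lra. rewrite !Rplus_0_r, Rminus_0_r. reflexivity.
Qed.

Lemma T01_0 x : eqOn (T01 0 x) x.
Proof.
  intros u [Hu|Hu]; [subst; apply T01_m1|].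
  rewrite T01_shift by lra. f_equal; ring.
Qed.

Lemma T01_eqOn t x y : 0 <= t <= 1 -> eqOn x y -> eqOn (T01 t x) (T01 t y).
Proof.
  intros Ht H u [Hu|Hu].
  - subst. rewrite !T01_m1. apply H, Omega_m1.
  - destruct (Rle_lt_dec t u).
    + rewrite !T01_shift by lra. apply H. right; lra.
    + rewrite !T01_gap by lra. rewrite (alpha_eqOn x y (1 - t + u) ltac:(lra) H).
      rewrite (H 0) by (right; lra). reflexivity.
Qed.

Lemma T01_01 t x u : 0 <= t <= 1 -> inC x -> Omega u -> 0 <= T01 t x u <= 1.
Proof.
  intros Ht Hx [Hu|Hu].
  - subst. rewrite T01_m1. apply inC_01; auto. exact Omega_m1.
  - destruct (Rle_lt_dec t u).
    + rewrite T01_shift by lra. apply inC_01; auto. right; lra.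
    + rewrite T01_gap by lra.
      pose proof (inC_01 x 0 Hx ltac:(right; lra)).
      pose proof (alpha_01 x (1 - t + u) Hx ltac:(lra)).
      unfold clamp. minmax_lra.
Qed.

Lemma T01_lip1 t x : 0 <= t <= 1 -> inC x -> lip1_on_nonneg (T01 t x).
Proof.
  intros Ht Hx.
  assert (Hacross : forall a b, 0 <= a < t -> t <= b ->
            Rabs (T01 t x a - T01 t x b) <= Rabs (a - b)).
  { intros a b Ha Hb. rewrite T01_gap, T01_shift by lra.
    pose proof (inC_lip1 x Hx (b - t) 0 ltac:(lra) ltac:(lra)) as Hl.
    rewrite Rminus_0_r, (Rabs_pos_eq (b - t)) in Hl by lra. apply Rabs_le_between in Hl.
    rewrite (Rabs_left (a - b)) by lra. apply Rabs_le. unfold clamp. minmax_lra. }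
  intros u1 u2 H1 H2. destruct (Rle_lt_dec t u1), (Rle_lt_dec t u2).
  - rewrite !T01_shift by lra. replace (u1 - u2) with ((u1 - t) - (u2 - t)) by ring.
    apply inC_lip1; auto; lra.
  - rewrite Rabs_minus_sym, (Rabs_minus_sym u1). apply Hacross; lra.
  - apply Hacross; lra.
  - rewrite !T01_gap by lra. destruct (Rle_lt_dec u1 u2).
    + pose proof (alpha_antitone_lip1 x (1 - t + u1) (1 - t + u2) Hx ltac:(lra)).
      rewrite (Rabs_left1 (u1 - u2)) by lra. apply Rabs_le. unfold clamp. minmax_lra.
    + pose proof (alpha_antitone_lip1 x (1 - t + u2) (1 - t + u1) Hx ltac:(lra)).
      rewrite (Rabs_pos_eq (u1 - u2)) by lra. apply Rabs_le. unfold clamp. minmax_lra.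
Qed.

Lemma T01_inC t x : 0 <= t <= 1 -> inC x -> inC (T01 t x).
Proof.
  intros Ht Hx. apply inC_intro; [intros; apply T01_01; auto|apply T01_lip1; auto].
Qed.

Lemma T01_nonexpansive t x y : 0 <= t <= 1 -> inC x -> inC y ->
  dist (T01 t x) (T01 t y) <= dist x y.
Proof.
  intros Ht Hx Hy.
  apply dist_le. intros u [Hu|Hu].
  - subst. rewrite !T01_m1. apply dist_ub; auto using inC_bounded, Omega_m1.
  - destruct (Rle_lt_dec t u).
    + rewrite !T01_shift by lra. apply dist_ub; auto using inC_bounded. right; lra.
    + rewrite !T01_gap by lra.
      pose proof (alpha_nonexpansive x y (1 - t + u) Hx Hy ltac:(lra)) as Ha.
      pose proof (dist_ub x y 0 (inC_bounded x Hx) (inC_bounded y Hy) ltac:(right; lra)) as H0.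
      apply Rabs_le_between in Ha, H0. apply Rabs_le. unfold clamp. minmax_lra.
Qed.

Lemma T01_dist_le t x : 0 <= t <= 1 -> inC x -> dist (T01 t x) x <= t.
Proof.
  intros Ht Hx. apply dist_le. intros u [Hu|Hu].
  - subst. rewrite T01_m1, Rminus_diag, Rabs_R0. lra.
  - destruct (Rle_lt_dec t u).
    + rewrite T01_shift by lra. eapply Rle_trans; [apply inC_lip1; auto; lra|].
      rewrite Rabs_left1; lra.
    + rewrite T01_gap by lra. pose proof (inC_lip1 x Hx u 0 Hu ltac:(lra)) as Hl.
      rewrite Rminus_0_r, (Rabs_pos_eq u) in Hl by lra. apply Rabs_le_between in Hl.
      apply Rabs_le. unfold clamp. minmax_lra.
Qed.

Lemma alpha_T01 t x v : 0 <= t <= 1 -> t <= v -> alpha (T01 t x) v = alpha x (v - t).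
Proof.
  intros Ht Hv. unfold alpha. f_equal. apply Lub_Rbar_eqset. intros r; split.
  - intros [s [[Hs|Hs] ->]].
    + subst. exists (-1). split; [left; reflexivity|apply T01_m1].
    + exists (s - t). split; [right; lra|apply T01_shift; lra].
  - intros [w [[Hw|Hw] ->]].
    + subst. exists (-1). split; [left; reflexivity|symmetry; apply T01_m1].
    + exists (w + t). split; [right; lra|]. rewrite T01_shift by lra. f_equal; ring.
Qed.

Lemma clamp_clamp a a' c t r : 0 <= t -> 0 <= r -> a <= a' -> a' - a <= r ->
  clamp a (clamp a' (c - t) (c + t) - r) (clamp a' (c - t) (c + t) + r)
  = clamp a (c - t - r) (c + t + r).
Proof. intros. unfold clamp. minmax_lra. Qed.

Lemma T01_add s t x : 0 <= s -> 0 <= t -> s + t <= 1 -> inC x ->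
  eqOn (T01 (s + t) x) (T01 s (T01 t x)).
Proof.
  intros Hs Ht Hst Hx u [Hu|Hu]; [subst; rewrite !T01_m1; reflexivity|].
  destruct (Rle_lt_dec (s + t) u); [rewrite !T01_shift by lra; f_equal; ring|].
  destruct (Rle_lt_dec s u).
  - rewrite (T01_shift s), !T01_gap by lra. f_equal; [do 2 f_equal| |]; ring.
  - rewrite !T01_gap by lra. rewrite alpha_T01, T01_at_0 by lra.
    pose proof (alpha_antitone_lip1 x (1 - (s + t) + u) (1 - t) Hx ltac:(lra)).
    replace (1 - s + u - t) with (1 - (s + t) + u) by ring.
    set (c := clamp (1 - alpha x (1 - t)) (x 0 - t) (x 0 + t)).
    replace (c - s + u) with (c - (s - u)) by ring.
    replace (c + s - u) with (c + (s - u)) by ring.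
    unfold c. rewrite clamp_clamp by lra. f_equal; ring.
Qed.

Local Notation T_half := (T01 (1/2)).

Lemma iter_T_half_eqOn n x y : eqOn x y -> eqOn (Nat.iter n T_half x) (Nat.iter n T_half y).
Proof. induction n; simpl; auto. intros H. apply T01_eqOn; [lra|auto]. Qed.

Lemma iter_T_half_inC n x : inC x -> inC (Nat.iter n T_half x).
Proof. induction n; simpl; auto. intros H. apply T01_inC; [lra|auto]. Qed.

Lemma iter_T_half_nonexpansive n x y : inC x -> inC y ->
  dist (Nat.iter n T_half x) (Nat.iter n T_half y) <= dist x y.
Proof.
  induction n; simpl; intros Hx Hy; [lra|].
  eapply Rle_trans; [apply T01_nonexpansive; auto using iter_T_half_inC; lra|auto].
Qed.

Lemma T01_iter_T_half_comm n r x : 0 <= r <= 1/2 -> inC x ->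
  eqOn (T01 r (Nat.iter n T_half x)) (Nat.iter n T_half (T01 r x)).
Proof.
  intros Hr Hx. induction n; simpl; [apply eqOn_refl|].
  pose proof (iter_T_half_inC n x Hx).
  eapply eqOn_trans; [apply eqOn_sym, T01_add; auto; lra|].
  rewrite Rplus_comm.
  eapply eqOn_trans; [apply T01_add; auto; lra|].
  apply T01_eqOn; [lra|exact IHn].
Qed.

Lemma mT_spec t : 0 <= t -> INR (mT t) <= 2 * t < INR (mT t) + 1.
Proof.
  intros Ht. destruct (base_Int_part (2 * t)) as [Hle Hgt].
  assert (Hnn : (0 <= Int_part (2 * t))%Z).
  { assert (Hlt : (-1 < Int_part (2 * t))%Z) by (apply lt_IZR; lra). lia. }
  unfold mT. rewrite INR_IZR_INZ, Z2Nat.id by exact Hnn. lra.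
Qed.

Lemma mT_half_sum n r : 0 <= r < 1/2 -> mT (INR n / 2 + r) = n.
Proof.
  intros Hr. unfold mT. rewrite <- (Int_part_spec _ (Z.of_nat n)); [apply Nat2Z.id|].
  rewrite <- INR_IZR_INZ. lra.
Qed.

Lemma T_decomp t x : 0 <= t -> inC x ->
  eqOn (T t x) (Nat.iter (mT t) T_half (T01 (t - INR (mT t) / 2) x)).
Proof.
  intros Ht Hx. unfold T. destruct Rle_dec as [Ht1|]; [|apply eqOn_refl].
  pose proof (mT_spec t Ht) as Hm.
  destruct (mT t) as [|[|[|m]]];
    [simpl in Hm |- *..|exfalso; rewrite !S_INR in Hm; pose proof (pos_INR m); lra].
  - rewrite Rdiv_0_l, Rminus_0_r. apply eqOn_refl.
  - replace t with (1/2 + (t - 1/2)) at 1 by ring. apply T01_add; auto; lra.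
  - assert (t = 1) by lra. subst. replace (1 - (1 + 1) / 2) with 0 by lra.
    eapply eqOn_trans; [|apply T01_eqOn, T01_eqOn, eqOn_sym, T01_0; lra].
    replace 1 with (1/2 + 1/2) at 1 by lra. apply T01_add; auto; lra.
Qed.

Lemma iter_T_half_T01 n r x : 0 <= r < 1 -> inC x ->
  eqOn (Nat.iter n T_half (T01 r x)) (T (INR n / 2 + r) x).
Proof.
  intros Hr Hx.
  assert (Hbase : forall n r, 0 <= r < 1/2 ->
            eqOn (Nat.iter n T_half (T01 r x)) (T (INR n / 2 + r) x)).
  { clear n r Hr. intros n r Hr.
    eapply eqOn_trans; [|apply eqOn_sym, T_decomp; auto; pose proof (pos_INR n); lra].
    rewrite mT_half_sum by exact Hr. replace (INR n / 2 + r - INR n / 2) with r by ring.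
    apply eqOn_refl. }
  destruct (Rlt_le_dec r (1/2)); [apply Hbase; lra|].
  eapply eqOn_trans.
  - apply iter_T_half_eqOn. replace r with (1/2 + (r - 1/2)) at 1 by ring.
    apply T01_add; auto; lra.
  - rewrite <- Nat.iter_succ_r.
    replace (INR n / 2 + r) with (INR (S n) / 2 + (r - 1/2)) by (rewrite S_INR; lra).
    apply Hbase; lra.
Qed.

Lemma T_eqOn t x y : 0 <= t -> eqOn x y -> eqOn (T t x) (T t y).
Proof.
  intros Ht H. unfold T. pose proof (mT_spec t Ht).
  destruct Rle_dec; [|apply iter_T_half_eqOn]; apply T01_eqOn; auto; lra.
Qed.

Lemma T_inC t x : 0 <= t -> inC x -> inC (T t x).
Proof.
  intros Ht Hx. unfold T. pose proof (mT_spec t Ht).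
  destruct Rle_dec; [|apply iter_T_half_inC]; apply T01_inC; auto; lra.
Qed.

Lemma T_nonexpansive t x y : 0 <= t -> inC x -> inC y -> dist (T t x) (T t y) <= dist x y.
Proof.
  intros Ht Hx Hy. unfold T. pose proof (mT_spec t Ht).
  destruct Rle_dec; [apply T01_nonexpansive; auto; lra|].
  eapply Rle_trans; [apply iter_T_half_nonexpansive; apply T01_inC; auto; lra|].
  apply T01_nonexpansive; auto; lra.
Qed.

Lemma T_0 x : eqOn (T 0 x) x.
Proof. unfold T. destruct Rle_dec; [apply T01_0|lra]. Qed.

Lemma T_add s t x : 0 <= s -> 0 <= t -> inC x -> eqOn (T (s + t) x) (T s (T t x)).
Proof.
  intros Hs Ht Hx.
  pose proof (mT_spec s Hs). pose proof (mT_spec t Ht).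
  set (n := mT s) in *. set (r := s - INR n / 2).
  set (m := mT t) in *. set (q := t - INR m / 2).
  assert (Hr : 0 <= r <= 1/2) by (unfold r; lra).
  assert (Hq : 0 <= q <= 1/2) by (unfold q; lra).
  apply eqOn_sym.
  eapply eqOn_trans; [apply T_decomp; auto using T_inC|fold n r].
  eapply eqOn_trans; [apply iter_T_half_eqOn, T01_eqOn, T_decomp; auto; lra|fold m q].
  assert (HqC : inC (T01 q x)) by (apply T01_inC; auto; lra).
  eapply eqOn_trans; [apply iter_T_half_eqOn, T01_iter_T_half_comm; auto|].
  rewrite <- Nat.iter_add.
  eapply eqOn_trans; [apply iter_T_half_eqOn, eqOn_sym, T01_add; auto; lra|].
  destruct (Rlt_le_dec (r + q) 1) as [Hrq|Hrq].
  - eapply eqOn_trans; [apply iter_T_half_T01; auto; lra|].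
    rewrite plus_INR. replace ((INR n + INR m) / 2 + (r + q)) with (s + t)
      by (unfold r, q; lra).
    apply eqOn_refl.
  - (* r = q = 1/2 *)
    replace (r + q) with (1/2 + 1/2) by lra.
    eapply eqOn_trans; [apply iter_T_half_eqOn, T01_add; auto; lra|].
    rewrite <- Nat.iter_succ_r.
    eapply eqOn_trans; [apply iter_T_half_T01; auto; lra|].
    rewrite S_INR, plus_INR. replace ((INR n + INR m + 1) / 2 + 1/2) with (s + t)
      by (unfold r, q in *; lra).
    apply eqOn_refl.
Qed.

Lemma T_dist_step t h x : 0 <= t -> 0 <= h <= 1 -> inC x -> dist (T (t + h) x) (T t x) <= h.
Proof.
  intros Ht Hh Hx.
  rewrite (dist_eqOn _ (T t (T h x)) _ (T t x)); [|apply T_add; auto; lra|apply eqOn_refl].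
  eapply Rle_trans; [apply T_nonexpansive; auto; apply T_inC; auto; lra|].
  unfold T. destruct Rle_dec; [apply T01_dist_le; auto|lra].
Qed.

Lemma T_continuous x t0 eps : inC x -> 0 <= t0 -> 0 < eps ->
  exists delta, 0 < delta /\ forall t, 0 <= t -> Rabs (t - t0) < delta ->
    dist (T t x) (T t0 x) < eps.
Proof.
  intros Hx Ht0 Heps. exists (Rmin eps 1). split; [minmax_lra|].
  intros t Ht Hd. pose proof (Rmin_l eps 1). pose proof (Rmin_r eps 1).
  destruct (Rle_lt_dec t0 t).
  - rewrite Rabs_pos_eq in Hd by lra. replace t with (t0 + (t - t0)) by ring.
    eapply Rle_lt_trans; [apply T_dist_step; auto; lra|lra].
  - rewrite Rabs_left in Hd by lra. rewrite dist_sym. replace t0 with (t + (t0 - t)) by ring.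
    eapply Rle_lt_trans; [apply T_dist_step; auto; lra|lra].
Qed.

Lemma T_nonexpansive_semigroup : nonexpansive_semigroup inC T.
Proof.
  split; [|split; [|split; [|split]]].
  - intros; apply T_inC; auto.
  - intros; apply T_nonexpansive; auto.
  - intros x _. apply T_0.
  - intros; apply T_add; auto.
  - intros x Hx t0 Ht0 eps Heps. apply T_continuous; auto.
Qed.

Definition tent (s u : R) : R :=
  if Req_EM_T u (-1) then 0 else Rmax 0 (Rmin (s - u) (2 - s + u)).

Lemma tent_m1 s : tent s (-1) = 0.
Proof. unfold tent. destruct Req_EM_T; [reflexivity|congruence]. Qed.

Lemma tent_nonneg s u : 0 <= u -> tent s u = Rmax 0 (Rmin (s - u) (2 - s + u)).
Proof. intros. unfold tent. destruct Req_EM_T; [lra|reflexivity]. Qed.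

Lemma tent_01 s u : 0 <= tent s u <= 1.
Proof. unfold tent. destruct Req_EM_T; minmax_lra. Qed.

Lemma tent_lip1_time s s' u : Rabs (tent s u - tent s' u) <= Rabs (s - s').
Proof.
  unfold tent. destruct Req_EM_T; [rewrite Rminus_diag, Rabs_R0; apply Rabs_pos|].
  pose proof (Rle_abs (s - s')). pose proof (Rle_abs (- (s - s'))).
  rewrite Rabs_Ropp in *. apply Rabs_le. minmax_lra.
Qed.

Lemma tent_lip1_space s u u' : 0 <= u -> 0 <= u' ->
  Rabs (tent s u - tent s u') <= Rabs (u - u').
Proof.
  intros Hu Hu'. rewrite !tent_nonneg by assumption.
  pose proof (Rle_abs (u - u')). pose proof (Rle_abs (- (u - u'))).
  rewrite Rabs_Ropp in *. apply Rabs_le. minmax_lra.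
Qed.

Lemma alpha_tent s v : 0 <= v -> alpha (tent s) v = Rmin 1 (Rmax 0 (s - v)).
Proof.
  intros Hv. apply alpha_eq.
  - intros w [->|Hw]; [rewrite tent_m1|rewrite tent_nonneg by lra]; minmax_lra.
  - destruct (Rle_lt_dec v (s - 1)); [exists (s - 1)|exists v];
      (split; [right; lra|rewrite tent_nonneg by lra; minmax_lra]).
Qed.

Lemma T01_tent t s : 0 <= t <= 1 -> 0 <= s -> eqOn (T01 t (tent s)) (tent (s + t)).
Proof.
  intros Ht Hs u [->|Hu]; [rewrite T01_m1, !tent_m1; reflexivity|].
  destruct (Rle_lt_dec t u).
  - rewrite T01_shift, !tent_nonneg by lra. do 2 f_equal; ring.
  - rewrite T01_gap, alpha_tent, !tent_nonneg by lra. unfold clamp. minmax_lra.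
Qed.

Lemma iter_T_half_tent n s : 0 <= s ->
  eqOn (Nat.iter n T_half (tent s)) (tent (s + INR n / 2)).
Proof.
  intros Hs. induction n; simpl Nat.iter.
  - rewrite Rdiv_0_l, Rplus_0_r. apply eqOn_refl.
  - pose proof (pos_INR n).
    eapply eqOn_trans; [apply T01_eqOn, IHn; lra|].
    eapply eqOn_trans; [apply T01_tent; lra|].
    rewrite S_INR. replace (s + INR n / 2 + 1/2) with (s + (INR n + 1) / 2) by lra.
    apply eqOn_refl.
Qed.

Lemma zeroE_tent : eqOn zeroE (tent 0).
Proof.
  intros u [->|Hu]; [rewrite tent_m1|rewrite tent_nonneg by lra]; unfold zeroE; minmax_lra.
Qed.

Lemma T_zeroE s : 0 <= s -> eqOn (T s zeroE) (tent s).
Proof.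
  intros Hs. eapply eqOn_trans; [apply T_eqOn, zeroE_tent; exact Hs|].
  unfold T. destruct Rle_dec.
  - rewrite <- (Rplus_0_l s) at 2. apply T01_tent; lra.
  - pose proof (mT_spec s Hs).
    eapply eqOn_trans; [apply iter_T_half_eqOn, T01_tent; lra|].
    eapply eqOn_trans; [apply iter_T_half_tent; lra|].
    replace (0 + (s - INR (mT s) / 2) + INR (mT s) / 2) with s by ring. apply eqOn_refl.
Qed.

Lemma zeroE_not_common_fixed_point : ~ common_fixed_point inC T zeroE.
Proof.
  intros [_ Hfix]. specialize (Hfix (1/2) ltac:(lra) 0 ltac:(right; lra)).
  rewrite T_zeroE, tent_nonneg in Hfix by (lra || (right; lra)).
  unfold zeroE in Hfix. revert Hfix. minmax_lra.
Qed.

Section RiemannSums.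

Variables (f : R -> R) (L : R).
Hypothesis L_ge0 : 0 <= L.
Hypothesis f_lip : forall a b, Rabs (f a - f b) <= L * Rabs (a - b).

Lemma lipschitz_ex_RInt a b : ex_RInt f a b.
Proof.
  apply (@ex_RInt_continuous R_CompleteNormedModule). intros z _.
  apply continuity_pt_filterlim. intros eps Heps.
  exists (eps / (L + 1)). split; [apply Rdiv_lt_0_compat; lra|].
  intros y [_ Hy]. simpl in *. unfold R_dist in *.
  eapply Rle_lt_trans; [apply f_lip|].
  assert (Hscale : (L + 1) * (eps / (L + 1)) = eps) by (field; lra).
  pose proof (Rabs_pos (y - z)). nra.
Qed.

Lemma riemann_piece_error a b xi d : a <= xi <= b -> b - a <= d ->
  Rabs (RInt f a b - f xi * (b - a)) <= L * d * (b - a).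
Proof.
  intros Hxi Hd.
  assert (Hshift : RInt (fun s => f s - f xi) a b = RInt f a b - f xi * (b - a)).
  { rewrite (RInt_minus f (fun _ => f xi)) by
      (apply lipschitz_ex_RInt || apply ex_RInt_const).
    rewrite RInt_const.
    change (RInt f a b - (b - a) * f xi = RInt f a b - f xi * (b - a)). ring. }
  rewrite <- Hshift, (Rmult_comm _ (b - a)). apply abs_RInt_le_const; [lra| |].
  - apply (ex_RInt_minus f (fun _ => f xi)); [apply lipschitz_ex_RInt|apply ex_RInt_const].
  - intros s Hs. eapply Rle_trans; [apply f_lip|].
    apply Rmult_le_compat_l; [lra|]. apply Rabs_le; lra.
Qed.

Lemma riemann_sum_error k (p xi : nat -> R) d :
  (forall i, (i <= k)%nat -> p i <= xi i <= p (S i)) ->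
  (forall i, (i <= k)%nat -> p (S i) - p i < d) ->
  Rabs (RInt f (p 0%nat) (p (S k)) - sum_n (fun i => f (xi i) * (p (S i) - p i)) k)
    <= L * d * (p (S k) - p 0%nat).
Proof.
  intros Hxi Hd. induction k.
  - rewrite sum_O. apply riemann_piece_error; [apply Hxi|left; apply Hd]; lia.
  - rewrite sum_Sn, <- (RInt_Chasles f _ (p (S k))) by apply lipschitz_ex_RInt.
    change (plus ?a ?b) with (a + b).
    assert (IH : Rabs (RInt f (p 0%nat) (p (S k))
                       - sum_n (fun i => f (xi i) * (p (S i) - p i)) k)
                 <= L * d * (p (S k) - p 0%nat))
      by (apply IHk; intros; [apply Hxi|apply Hd]; lia).
    pose proof (riemann_piece_error (p (S k)) (p (S (S k))) (xi (S k)) d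
                  ltac:(apply Hxi; lia) ltac:(left; apply Hd; lia)) as Hlast.
    replace (L * d * (p (S (S k)) - p 0%nat))
      with (L * d * (p (S k) - p 0%nat) + L * d * (p (S (S k)) - p (S k))) by ring.
    eapply Rle_trans; [|apply Rplus_le_compat; [exact IH|exact Hlast]].
    eapply Rle_trans; [|apply Rabs_triang]. right. f_equal. ring.
Qed.

Lemma abs_RInt_le_support M a b c w : a <= b -> a <= c -> 0 <= w ->
  (forall s, Rabs (f s) <= M) -> (forall s, s <= c \/ c + w <= s -> f s = 0) ->
  Rabs (RInt f a b) <= M * w.
Proof.
  intros Hab Hac Hw HM Hsupp.
  assert (HM0 : 0 <= M) by (eapply Rle_trans; [apply Rabs_pos|apply (HM 0)]).
  assert (Hzero : forall x y, x <= y -> (forall s, x <= s <= y -> f s = 0) ->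
                    Rabs (RInt f x y) <= 0).
  { intros x y Hxy Hf. rewrite <- (Rmult_0_r (y - x)).
    apply abs_RInt_le_const; auto using lipschitz_ex_RInt.
    intros s Hs. rewrite Hf, Rabs_R0 by exact Hs. lra. }
  assert (Hbound : forall x y, x <= y -> Rabs (RInt f x y) <= M * (y - x)).
  { intros x y Hxy. rewrite Rmult_comm.
    apply abs_RInt_le_const; auto using lipschitz_ex_RInt. }
  destruct (Rle_lt_dec b c).
  - pose proof (Hzero a b Hab ltac:(intros; apply Hsupp; lra)). nra.
  - rewrite <- (RInt_Chasles f a c b) by apply lipschitz_ex_RInt.
    change (plus ?x ?y) with (x + y).
    pose proof (Hzero a c Hac ltac:(intros; apply Hsupp; lra)).
    eapply Rle_trans; [apply Rabs_triang|].
    destruct (Rle_lt_dec b (c + w)).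
    + pose proof (Hbound c b ltac:(lra)). nra.
    + rewrite <- (RInt_Chasles f c (c + w) b) by apply lipschitz_ex_RInt.
      change (plus ?x ?y) with (x + y).
      pose proof (Hbound c (c + w) ltac:(lra)).
      pose proof (Hzero (c + w) b ltac:(lra) ltac:(intros; apply Hsupp; lra)).
      pose proof (Rabs_triang (RInt f c (c + w)) (RInt f (c + w) b)).
      replace (c + w - c) with w in * by ring. lra.
Qed.

End RiemannSums.

Lemma tent_lip_time u s s' : Rabs (tent s u - tent s' u) <= 1 * Rabs (s - s').
Proof. rewrite Rmult_1_l. apply tent_lip1_time. Qed.

Definition orbit_integral (t u : R) : R := RInt (fun s => tent s u) 0 t.

Lemma orbit_integral_bound t u : 0 <= t -> Omega u -> Rabs (orbit_integral t u) <= 2.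
Proof.
  intros Ht Hu. rewrite <- (Rmult_1_l 2).
  assert (Hsupp : exists c, 0 <= c /\
            forall s, s <= c \/ c + 2 <= s -> tent s u = 0).
  { destruct Hu as [->|Hu].
    - exists 0. split; [lra|]. intros. apply tent_m1.
    - exists u. split; [exact Hu|]. intros s Hs. rewrite tent_nonneg by exact Hu.
      minmax_lra. }
  destruct Hsupp as [c [Hc Hsupp]].
  apply (abs_RInt_le_support _ 1 ltac:(lra) (tent_lip_time u) 1 0 t c 2); auto; try lra.
  intros s. rewrite Rabs_pos_eq; apply tent_01.
Qed.

Lemma orbit_integral_inE t : 0 < t -> inE (orbit_integral t).
Proof.
  intros Ht. apply (inE_intro _ 2 t Ht); [intros; apply orbit_integral_bound; auto; lra|].
  intros u1 u2 H1 H2. unfold orbit_integral.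
  assert (Hint : forall u, ex_RInt (fun s => tent s u) 0 t)
    by (intros u; apply (lipschitz_ex_RInt _ 1 ltac:(lra) (tent_lip_time u))).
  rewrite <- (RInt_minus (fun s => tent s u1) (fun s => tent s u2)) by apply Hint.
  rewrite <- (Rminus_0_r t) at 2. apply abs_RInt_le_const; [lra| |].
  - apply (ex_RInt_minus (fun s => tent s u1) (fun s => tent s u2)); apply Hint.
  - intros s _. apply tent_lip1_space; assumption.
Qed.

Lemma partition_nonneg k (p xi : nat -> R) : p 0%nat = 0 ->
  (forall i, (i <= k)%nat -> p i <= xi i <= p (S i)) ->
  forall i, (i <= k)%nat -> 0 <= xi i.
Proof.
  intros H0 Hxi i Hi.
  assert (Hp : forall j, (j <= i)%nat -> 0 <= p j).
  { induction j as [|j IHj]; intros Hj; [lra|].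
    pose proof (Hxi j ltac:(lia)). specialize (IHj ltac:(lia)). lra. }
  pose proof (Hxi i Hi). pose proof (Hp i (le_n _)). lra.
Qed.

Lemma orbit_integral_is_E_integral t : 0 < t ->
  is_E_integral (fun s => T s zeroE) 0 t (orbit_integral t).
Proof.
  intros Ht. split; [apply orbit_integral_inE; exact Ht|].
  intros eps Heps. exists (eps / t). split; [apply Rdiv_lt_0_compat; lra|].
  intros k p xi H0 Hk Hxi Hd. apply dist_le. intros u Hu. unfold riemann_sum.
  rewrite (sum_n_ext_loc _ (fun i => tent (xi i) u * (p (S i) - p i))).
  2:{ intros i Hi. rewrite T_zeroE by (eauto using partition_nonneg). reflexivity. }
  unfold orbit_integral. rewrite <- H0, <- Hk.
  eapply Rle_trans; [apply (riemann_sum_error _ 1 ltac:(lra) (tent_lip_time u)); eauto|].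
  rewrite H0, Hk. right. field. lra.
Qed.

Lemma orbit_mean_lim :
  is_lim (fun t => supn (fun u => / t * orbit_integral t u - zeroE u)) p_infty 0.
Proof.
  assert (Hlim : is_lim (fun t => 2 * / t) p_infty 0).
  { pose proof (is_lim_scal_l _ 2 _ _
                  (is_lim_inv _ _ _ (is_lim_id p_infty) ltac:(discriminate))) as H.
    simpl in H. rewrite Rmult_0_r in H. exact H. }
  apply (is_lim_le_le_loc (fun _ => 0) (fun t => 2 * / t)); [|apply is_lim_const|exact Hlim].
  exists 0. intros t Ht.
  assert (Hbound : forall u, Omega u -> Rabs (/ t * orbit_integral t u - zeroE u) <= 2 * / t).
  { intros u Hu. unfold zeroE.
    rewrite Rminus_0_r, Rabs_mult, Rabs_inv, (Rabs_pos_eq t), Rmult_comm by lra.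
    apply Rmult_le_compat_r; [left; apply Rinv_0_lt_compat; lra|].
    apply orbit_integral_bound; auto; lra. }
  split; [|apply supn_le; exact Hbound].
  eapply Rle_trans; [apply Rabs_pos|]. apply supn_ub; [exists (2 * / t); exact Hbound|].
  exact Omega_m1.
Qed.

Theorem mainTheorem1 :
  closed_in_E inC /\ convex_set inC /\
  nonexpansive_semigroup inC T /\
  inC zeroE /\ ~ common_fixed_point inC T zeroE /\
  exists I : R -> R -> R,
    (forall t, 0 < t -> is_E_integral (fun s => T s zeroE) 0 t (I t)) /\
    is_lim (fun t => supn (fun u => / t * I t u - zeroE u)) p_infty 0.
Proof.
  split; [exact inC_closed|].
  split; [exact inC_convex|].
  split; [exact T_nonexpansive_semigroup|].
  split; [exact inC_zeroE|].
  split; [exact zeroE_not_common_fixed_point|].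
  exists orbit_integral. split; [exact orbit_integral_is_E_integral|exact orbit_mean_lim].
Qed.
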